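(* Suppose the solution sets of (P) and (D) are nonempty and $A$ has full row rank, and suppose $\{\tau_k\}$ is positive, nonincreasing and $\tau_k\downarrow\tau_\infty>0$. Let $\{(y^k,x^k)\}$ be generated by Algorithm Snipal (described below) where each $y^{k+1}$ satisfies the stopping criterion (A'): $\|\nabla\psi_k(y^{k+1})\|\le\frac{\min(\sqrt{\tau_k},1)}{\sigma_k}\epsilon_k$ with $\epsilon_k\ge0$, $\sum_k\epsilon_k<\infty$. Then $\{(y^k,x^k)\}$ is bounded, $\{x^k\}$ converges to an optimal solution of (P) and $\{y^k\}$ converges to an optimal solution of (D).
   Context: Data: $A\in\mathbb{R}^{m\times n}$, $b\in\mathbb{R}^m$, $c\in\mathbb{R}^n$, $K=\{x\in\mathbb{R}^n\mid l\le x\le u\}$ with $l_i\in[-\infty,\infty)$, $u_i\in(-\infty,\infty]$; $\delta_K$ its indicator, $\delta_K^*$ its Fenchel conjugate, $\Pi_K$ the projection onto $K$. (P): $\min\{c^Tx+\delta_K(x)\mid Ax=b\}$; (D): $\max\{-\delta_K^*(A^Ty-c)+b^Ty\mid y\in\mathbb{R}^m\}$. Augmented Lagrangian $L_\sigma(y;x)=-b^Ty-\langle\Pi_K(x-\sigma(c-A^Ty)),c-A^Ty\rangle-\frac{1}{2\sigma}\|\Pi_K(x-\sigma(c-A^Ty))-x\|^2$. Algorithm Snipal: given $(x^0,y^0)$, $\sigma_0>0$, a nondecreasing sequence $\sigma_k\uparrow\sigma_\infty\le\infty$ and a positive nonincreasing sequence $\{\tau_k\}$; for $k=0,1,\dots$: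 compute $y^{k+1}$ as an approximate minimizer of $\psi_k(y):=L_{\sigma_k}(y;x^k)+\frac{\tau_k}{2\sigma_k}\|y-y^k\|^2$, then set $x^{k+1}=\Pi_K(x^k-\sigma_k(c-A^Ty^{k+1}))$. Here $\nabla\psi_k(y)=-b+A\Pi_K(x^k+\sigma_k(A^Ty-c))+\tau_k\sigma_k^{-1}(y-y^k)$. *)

(* classical reals. Vectors in R^n are functions nat -> R,
   only the indices i < n are relevant; matrices are nat -> nat -> R. *)
From Stdlib Require Import Reals Lra.
Open Scope R_scope.

Fixpoint rsum (n : nat) (f : nat -> R) : R :=
  match n with O => 0 | S k => rsum k f + f k end.

Definition vec := nat -> R.
Definition dot (n : nat) (u v : vec) : R := rsum n (fun i => u i * v i).
Definition vnorm (n : nat) (v : vec) : R := sqrt (dot n v v).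
Definition vadd (u v : vec) : vec := fun i => u i + v i.
Definition vsub (u v : vec) : vec := fun i => u i - v i.
Definition vscal (a : R) (v : vec) : vec := fun i => a * v i.
Definition mulA (n : nat) (A : nat -> nat -> R) (x : vec) : vec :=
  fun i => rsum n (fun j => A i j * x j).
Definition mulAt (m : nat) (A : nat -> nat -> R) (y : vec) : vec :=
  fun j => rsum m (fun i => A i j * y i).

Definition full_row_rank (m n : nat) (A : nat -> nat -> R) : Prop :=
  forall y : vec, (forall j, (j < n)%nat -> mulAt m A y j = 0) ->
    forall i, (i < m)%nat -> y i = 0.

(* Box K = {x | l <= x <= u}; lower bounds l i = None means -infinity,
   upper bounds u i = None means +infinity. *)
Definition inK (n : nat) (l u : nat -> option R) (x : vec) : Prop :=
  forall i, (i < n)%nat ->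
    (match l i with Some a => a <= x i | None => True end) /\
    (match u i with Some b => x i <= b | None => True end).

Definition projK (l u : nat -> option R) (x : vec) : vec :=
  fun i =>
    let v := match l i with Some a => Rmax a (x i) | None => x i end in
    match u i with Some b => Rmin b v | None => v end.

(* (P): min { c^T x + delta_K(x) | A x = b } *)
Definition P_feasible (m n : nat) (A : nat -> nat -> R) (b : vec)
  (l u : nat -> option R) (x : vec) : Prop :=
  inK n l u x /\ forall i, (i < m)%nat -> mulA n A x i = b i.

Definition P_optimal (m n : nat) (A : nat -> nat -> R) (b c : vec)
  (l u : nat -> option R) (x : vec) : Prop :=
  P_feasible m n A b l u x /\
  forall x', P_feasible m n A b l u x' -> dot n c x <= dot n c x'.

(* delta_K^*(z) = sup_{x in K} <z, x>; conj_val ... z v : this sup is finite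
   and equals v *)
Definition conj_val (n : nat) (l u : nat -> option R) (z : vec) (v : R) : Prop :=
  is_lub (fun r => exists x, inK n l u x /\ r = dot n z x) v.

(* (D): max { -delta_K^*(A^T y - c) + b^T y }; optimal y: the objective is
   finite at y and no y' achieves a larger (finite) value *)
Definition D_optimal (m n : nat) (A : nat -> nat -> R) (b c : vec)
  (l u : nat -> option R) (y : vec) : Prop :=
  exists v, conj_val n l u (vsub (mulAt m A y) c) v /\
  forall y' v', conj_val n l u (vsub (mulAt m A y') c) v' ->
    - v' + dot m b y' <= - v + dot m b y.

(* gradient of psi_k(y) = L_{sigma}(y; xk) + tau/(2 sigma) ||y - yk||^2 :
   -b + A Pi_K(xk + sigma (A^T y - c)) + (tau/sigma) (y - yk) *)
Definition grad_psi (m n : nat) (A : nat -> nat -> R) (b c : vec)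
  (l u : nat -> option R) (sigma tau : R) (xk yk y : vec) : vec :=
  vadd (vadd (vscal (-1) b)
             (mulA n A (projK l u (vadd xk (vscal sigma (vsub (mulAt m A y) c))))))
       (vscal (tau / sigma) (vsub y yk)).

(* Fix a KKT pair (ys, xs); it exists because (P) has a solution, by Farkas' lemma (obtained
   through Fourier-Motzkin elimination).  Write delta_k = grad psi_k(y^{k+1}); since
   x^{k+1} = Pi_K(x^k - sigma_k (c - A^T y^{k+1})), delta_k = A x^{k+1} - b + tau_k/sigma_k
   (y^{k+1} - y^k).  The variational inequality of the projection, tested at xs, together with
   the optimality conditions of (ys, xs) gives
     Phi_k(y^{k+1}, x^{k+1}) + tau_k |y^{k+1} - y^k|^2 + |x^{k+1} - x^k|^2
       <= Phi_k(y^k, x^k) + 2 sigma_k <y^{k+1} - ys, delta_k>,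
   with Phi_k(y, x) = tau_k |y - ys|^2 + |x - xs|^2, and criterion (A') bounds the last term by
   2 eps_k Phi_k(y^{k+1}, x^{k+1})^(1/2).  As tau_k is nonincreasing, R_k = Phi_k(y^k, x^k)^(1/2)
   satisfies R_{k+1} <= R_k + 2 eps_k, so R_k is bounded (hence so are the iterates, because
   tau_k >= tau_inf > 0) and the steps are square summable.  Consequently the residuals vanish and
   every cluster point of the iterates is again a KKT pair; running the same estimate with that
   cluster point as reference pair shows that R_k tends to 0 along the whole sequence. *)

From Stdlib Require Import Reals Lra Lia Psatz List Classical ClassicalEpsilon.
Import ListNotations.
Open Scope R_scope.

Lemma rsum_ext n f g : (forall i, (i < n)%nat -> f i = g i) -> rsum n f = rsum n g.
Proof.
  induction n as [|n IH]; intros H; simpl; [reflexivity|].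
  rewrite IH by (intros; apply H; lia). rewrite H by lia. reflexivity.
Qed.

Lemma rsum_le n f g : (forall i, (i < n)%nat -> f i <= g i) -> rsum n f <= rsum n g.
Proof.
  induction n as [|n IH]; intros H; simpl; [lra|].
  assert (f n <= g n) by (apply H; lia).
  assert (rsum n f <= rsum n g) by (apply IH; intros; apply H; lia).
  lra.
Qed.

Lemma rsum_plus n f g : rsum n (fun i => f i + g i) = rsum n f + rsum n g.
Proof. induction n; simpl; [|rewrite IHn]; lra. Qed.

Lemma rsum_minus n f g : rsum n (fun i => f i - g i) = rsum n f - rsum n g.
Proof. induction n; simpl; [|rewrite IHn]; lra. Qed.

Lemma rsum_scal n r f : rsum n (fun i => r * f i) = r * rsum n f.
Proof. induction n; simpl; [|rewrite IHn]; lra. Qed.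

Lemma rsum_0 n : rsum n (fun _ => 0) = 0.
Proof. induction n; simpl; lra. Qed.

Lemma rsum_nonneg n f : (forall i, (i < n)%nat -> 0 <= f i) -> 0 <= rsum n f.
Proof. intros H. rewrite <- (rsum_0 n). apply rsum_le; auto. Qed.

Lemma rsum_nonpos n f : (forall i, (i < n)%nat -> f i <= 0) -> rsum n f <= 0.
Proof. intros H. rewrite <- (rsum_0 n). apply rsum_le; auto. Qed.

Lemma rsum_term_le n f j :
  (forall i, (i < n)%nat -> 0 <= f i) -> (j < n)%nat -> f j <= rsum n f.
Proof.
  induction n as [|n IH]; intros H Hj; simpl; [lia|].
  assert (0 <= rsum n f) by (apply rsum_nonneg; intros; apply H; lia).
  assert (0 <= f n) by (apply H; lia).
  destruct (Nat.eq_dec j n) as [->|Hne]; [lra|].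
  assert (f j <= rsum n f) by (apply IH; [intros; apply H|]; lia).
  lra.
Qed.

Lemma rsum_swap n m (f : nat -> nat -> R) :
  rsum n (fun i => rsum m (f i)) = rsum m (fun j => rsum n (fun i => f i j)).
Proof. induction n; simpl; [now rewrite rsum_0|]. rewrite IHn, <- rsum_plus. reflexivity. Qed.

Lemma rsum_indicator n i s f :
  (i < n)%nat -> rsum n (fun k => f k * (if Nat.eq_dec k i then s else 0)) = s * f i.
Proof.
  induction n as [|n IH]; intros Hi; simpl; [lia|].
  destruct (Nat.eq_dec n i) as [->|Hne].
  - rewrite (rsum_ext _ _ (fun _ => 0)), rsum_0; [ring|].
    intros k Hk. destruct (Nat.eq_dec k i); [lia|ring].
  - rewrite IH by lia. ring.
Qed.

Lemma sum_f_R0_rsum f N : sum_f_R0 f N = rsum (S N) f.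
Proof. induction N; simpl in *; [lra|]. rewrite IHN. reflexivity. Qed.

Lemma dot_comm n u v : dot n u v = dot n v u.
Proof. apply rsum_ext. intros; ring. Qed.

Lemma dot_nonneg n u : 0 <= dot n u u.
Proof. apply rsum_nonneg. intros; nra. Qed.

Lemma dot_sub_l n u v w : dot n (vsub u v) w = dot n u w - dot n v w.
Proof. unfold dot. rewrite <- rsum_minus. apply rsum_ext. intros; unfold vsub; ring. Qed.

Lemma dot_sub_r n u v w : dot n w (vsub u v) = dot n w u - dot n w v.
Proof. rewrite dot_comm, dot_sub_l, !(dot_comm n w). reflexivity. Qed.

Lemma dot_lincomb n r s u v w :
  dot n (vadd (vscal r u) (vscal s v)) w = r * dot n u w + s * dot n v w.
Proof.
  unfold dot. rewrite <- !rsum_scal, <- rsum_plus.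
  apply rsum_ext. intros; unfold vadd, vscal; ring.
Qed.

Lemma dot_opp n v w : dot n (vscal (-1) v) w = - dot n v w.
Proof.
  unfold dot. replace (- rsum n (fun i => v i * w i)) with (-1 * rsum n (fun i => v i * w i))
    by ring.
  rewrite <- rsum_scal. apply rsum_ext. intros; unfold vscal; ring.
Qed.

Lemma comp_sq_le_dot n v i : (i < n)%nat -> v i * v i <= dot n v v.
Proof. intros Hi. apply (rsum_term_le n (fun i => v i * v i)); auto. intros; nra. Qed.

Lemma dot_mulAt m n A y x : dot n (mulAt m A y) x = dot m y (mulA n A x).
Proof.
  unfold dot, mulAt, mulA.
  transitivity (rsum n (fun i => rsum m (fun j => A j i * y j * x i))).
  - apply rsum_ext. intros. rewrite Rmult_comm, <- rsum_scal. apply rsum_ext. intros; ring.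
  - rewrite rsum_swap. apply rsum_ext. intros. rewrite <- rsum_scal. apply rsum_ext. intros; ring.
Qed.

Lemma mulA_vsub n A x x' j : mulA n A (vsub x x') j = mulA n A x j - mulA n A x' j.
Proof. unfold mulA. rewrite <- rsum_minus. apply rsum_ext. intros; unfold vsub; ring. Qed.

Lemma mulAt_vsub m A y y' i : mulAt m A (vsub y y') i = mulAt m A y i - mulAt m A y' i.
Proof. unfold mulAt. rewrite <- rsum_minus. apply rsum_ext. intros; unfold vsub; ring. Qed.

Lemma mulA_lincomb n A x d t j :
  mulA n A (vadd x (vscal t d)) j = mulA n A x j + t * mulA n A d j.
Proof.
  unfold mulA. rewrite <- rsum_scal, <- rsum_plus.
  apply rsum_ext. intros; unfold vadd, vscal; ring.
Qed.

Lemma dot_vsub_sym n u v : dot n (vsub u v) (vsub u v) = dot n (vsub v u) (vsub v u).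
Proof. apply rsum_ext. intros; unfold vsub; ring. Qed.

Lemma dot_polarization n u v w :
  2 * dot n (vsub u v) (vsub u w) =
  dot n (vsub u v) (vsub u v) + dot n (vsub u w) (vsub u w) - dot n (vsub v w) (vsub v w).
Proof.
  unfold dot. rewrite <- rsum_scal, <- rsum_plus, <- rsum_minus.
  apply rsum_ext. intros; unfold vsub; ring.
Qed.

Lemma vnorm_nonneg n u : 0 <= vnorm n u.
Proof. apply sqrt_pos. Qed.

Lemma vnorm_sq n u : vnorm n u * vnorm n u = dot n u u.
Proof. apply sqrt_sqrt, dot_nonneg. Qed.

Lemma vnorm_le n v M : 0 <= M -> dot n v v <= M * M -> vnorm n v <= M.
Proof.
  intros HM H. unfold vnorm. rewrite <- (sqrt_square M) by exact HM.
  now apply sqrt_le_1_alt.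
Qed.

Lemma dot_sq_le n u v : dot n u v * dot n u v <= dot n u u * dot n v v.
Proof.
  assert (Hq : forall t, 0 <= dot n u u - 2 * t * dot n u v + t * t * dot n v v).
  { intros t. replace (dot n u u - 2 * t * dot n u v + t * t * dot n v v)
      with (dot n (vsub u (vscal t v)) (vsub u (vscal t v))) by
      (unfold dot; rewrite <- !rsum_scal, <- rsum_minus, <- rsum_plus;
       apply rsum_ext; intros; unfold vsub, vscal; ring).
    apply dot_nonneg. }
  pose proof (dot_nonneg n u); pose proof (dot_nonneg n v).
  destruct (Req_dec (dot n v v) 0) as [Hz|Hz].
  - rewrite Hz. destruct (Req_dec (dot n u v) 0) as [Huv|Huv]; [rewrite Huv; lra|].
    specialize (Hq ((dot n u u + 1) / (2 * dot n u v))). rewrite Hz in Hq.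
    replace (2 * ((dot n u u + 1) / (2 * dot n u v)) * dot n u v)
      with (dot n u u + 1) in Hq by (field; auto).
    lra.
  - specialize (Hq (dot n u v / dot n v v)).
    replace (dot n u u - 2 * (dot n u v / dot n v v) * dot n u v
             + dot n u v / dot n v v * (dot n u v / dot n v v) * dot n v v)
      with ((dot n u u * dot n v v - dot n u v * dot n u v) / dot n v v)
      in Hq by (field; auto).
    assert (0 <= dot n u u * dot n v v - dot n u v * dot n u v); [|lra].
    replace (dot n u u * dot n v v - dot n u v * dot n u v)
      with ((dot n u u * dot n v v - dot n u v * dot n u v) / dot n v v * dot n v v)
      by (field; auto).
    apply Rmult_le_pos; lra.
Qed.

Lemma dot_Cauchy_Schwarz n u v : dot n u v <= vnorm n u * vnorm n v.
Proof.
  pose proof (vnorm_nonneg n u); pose proof (vnorm_nonneg n v).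
  destruct (Rle_dec (dot n u v) 0); [nra|].
  unfold vnorm. rewrite <- sqrt_mult by apply dot_nonneg.
  rewrite <- (sqrt_square (dot n u v)) by lra.
  apply sqrt_le_1_alt, dot_sq_le.
Qed.

Lemma vnorm_triangle n u v : vnorm n (vadd u v) <= vnorm n u + vnorm n v.
Proof.
  apply vnorm_le; [pose proof (vnorm_nonneg n u); pose proof (vnorm_nonneg n v); lra|].
  replace (dot n (vadd u v) (vadd u v)) with (dot n u u + 2 * dot n u v + dot n v v)
    by (unfold dot; rewrite <- rsum_scal, <- !rsum_plus;
        apply rsum_ext; intros; unfold vadd; ring).
  pose proof (dot_Cauchy_Schwarz n u v). rewrite <- (vnorm_sq n u), <- (vnorm_sq n v). lra.
Qed.

Lemma comp_abs_le_vnorm n v i : (i < n)%nat -> Rabs (v i) <= vnorm n v.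
Proof.
  intros Hi. unfold vnorm. rewrite <- sqrt_Rsqr_abs.
  apply sqrt_le_1_alt. apply comp_sq_le_dot, Hi.
Qed.

Lemma vnorm_le_sub_add n v w : vnorm n v <= vnorm n (vsub v w) + vnorm n w.
Proof.
  replace (vnorm n v) with (vnorm n (vadd (vsub v w) w)); [apply vnorm_triangle|].
  unfold vnorm. f_equal. apply rsum_ext. intros; unfold vadd, vsub; ring.
Qed.

Lemma Un_cv_const a : Un_cv (fun _ => a) a.
Proof.
  intros e He. exists 0%nat. intros. unfold R_dist. rewrite Rminus_diag, Rabs_R0. exact He.
Qed.

Lemma Un_cv_scal a v L : Un_cv v L -> Un_cv (fun k => a * v k) (a * L).
Proof. intros H. apply CV_mult; [apply Un_cv_const|exact H]. Qed.

Lemma Un_cv_le_const v L a : Un_cv v L -> (forall k, v k <= a) -> L <= a.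
Proof. intros H Ha. eapply Rle_cv_lim; [exact Ha|exact H|apply Un_cv_const]. Qed.

Lemma Un_cv_ge_const v L a : Un_cv v L -> (forall k, a <= v k) -> a <= L.
Proof. intros H Ha. eapply Rle_cv_lim; [exact Ha|apply Un_cv_const|exact H]. Qed.

Lemma Un_cv_squeeze0 v w : (forall k, Rabs (v k) <= w k) -> Un_cv w 0 -> Un_cv v 0.
Proof.
  intros H Hw e He. destruct (Hw e He) as [N HN]. exists N. intros k Hk.
  specialize (HN k Hk). specialize (H k). unfold R_dist in *. rewrite Rminus_0_r in *.
  apply Rabs_def2 in HN. lra.
Qed.

Lemma Un_cv_sq_squeeze0 v w : (forall k, v k * v k <= w k) -> Un_cv w 0 -> Un_cv v 0.
Proof.
  intros H Hw e He. destruct (Hw (e * e)) as [N HN]; [nra|]. exists N. intros k Hk.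
  specialize (HN k Hk). specialize (H k). unfold R_dist in *. rewrite Rminus_0_r in *.
  apply Rabs_def2 in HN. apply Rabs_def1; nra.
Qed.

Lemma nonneg_bounded_sums_to0 a B :
  (forall k, 0 <= a k) -> (forall k, rsum k a <= B) -> Un_cv a 0.
Proof.
  intros Ha HB.
  destruct (growing_cv (fun k => rsum k a)) as [L HL].
  { intros k. simpl. specialize (Ha k). lra. }
  { exists B. intros r [k ->]. apply HB. }
  assert (HL1 : Un_cv (fun k => rsum (S k) a) L).
  { intros e He. destruct (HL e He) as [N HN]. exists N. intros; apply HN; lia. }
  pose proof (CV_minus _ _ _ _ HL1 HL) as Hd. rewrite Rminus_diag in Hd.
  intros e He. destruct (Hd e He) as [N HN]. exists N. intros k Hk.
  specialize (HN k Hk). simpl in HN. replace (rsum k a + a k - rsum k a) with (a k) in HN by ring.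
  exact HN.
Qed.

Lemma Un_cv_rsum_series a s : Un_cv (fun N => sum_f_R0 a N) s -> Un_cv (fun k => rsum k a) s.
Proof.
  intros H e He. destruct (H e He) as [N HN]. exists (S N). intros [|k] Hk; [lia|].
  rewrite <- sum_f_R0_rsum. apply HN. lia.
Qed.

Lemma rsum_le_lim a s k :
  (forall i, 0 <= a i) -> Un_cv (fun k => rsum k a) s -> rsum k a <= s.
Proof.
  intros Ha Hs. apply (growing_ineq (fun k => rsum k a)); [|exact Hs].
  intros i. simpl. specialize (Ha i). lra.
Qed.

Lemma quasi_Fejer_to0 (r a : nat -> R) s :
  (forall k, 0 <= r k) -> (forall k, 0 <= a k) -> Un_cv (fun k => rsum k a) s ->
  (forall i j, (i <= j)%nat -> r j <= r i + (rsum j a - rsum i a)) ->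
  (forall e, e > 0 -> forall N, exists k, (N <= k)%nat /\ r k < e) ->
  Un_cv r 0.
Proof.
  intros Hr Ha Hs Hmono Hsmall e He.
  destruct (Hs (e / 2)) as [N HN]; [lra|].
  destruct (Hsmall (e / 2) ltac:(lra) N) as [j [Hj Hrj]].
  exists j. intros k Hk. unfold R_dist. rewrite Rminus_0_r, Rabs_right by (apply Rle_ge, Hr).
  specialize (HN j Hj). unfold R_dist in HN. apply Rabs_def2 in HN.
  pose proof (Hmono j k Hk). pose proof (rsum_le_lim a s k Ha Hs). lra.
Qed.

Definition strict_incr (phi : nat -> nat) : Prop := forall k, (phi k < phi (S k))%nat.

Lemma strict_incr_ge phi : strict_incr phi -> forall k, (k <= phi k)%nat.
Proof. intros H k. induction k; [lia|]. specialize (H k). lia. Qed.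

Lemma strict_incr_comp phi psi :
  strict_incr phi -> strict_incr psi -> strict_incr (fun k => phi (psi k)).
Proof.
  intros Hphi Hpsi k.
  assert (Hmono : forall j k, (j <= k)%nat -> (phi j <= phi k)%nat).
  { intros j k' Hjk. induction Hjk as [|k'' _ IH]; [lia|]. specialize (Hphi k''). lia. }
  specialize (Hpsi k). specialize (Hmono _ _ Hpsi). specialize (Hphi (psi k)). lia.
Qed.

Lemma Un_cv_subseq v L phi : strict_incr phi -> Un_cv v L -> Un_cv (fun k => v (phi k)) L.
Proof.
  intros Hphi H e He. destruct (H e He) as [N HN]. exists N. intros k Hk.
  apply HN. pose proof (strict_incr_ge phi Hphi k). lia.
Qed.

Lemma Bolzano_Weierstrass_subseq (v : nat -> R) M :
  (forall k, Rabs (v k) <= M) -> exists phi L, strict_incr phi /\ Un_cv (fun k => v (phi k)) L.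
Proof.
  intros HM.
  destruct (Bolzano_Weierstrass v (fun r => -M <= r <= M) (compact_P3 (-M) M)) as [L HL].
  { intros k. specialize (HM k). revert HM. unfold Rabs. destruct Rcase_abs; lra. }
  assert (Hnext : forall N j, exists p, (N <= p)%nat /\ Rabs (v p - L) < RinvN j).
  { intros N j. apply (HL (disc L (RinvN j)) N). exists (RinvN j). intros r Hr. exact Hr. }
  set (g := fun N j => proj1_sig (constructive_indefinite_description _ (Hnext N j))).
  assert (Hg : forall N j, (N <= g N j)%nat /\ Rabs (v (g N j) - L) < RinvN j)
    by (intros; apply proj2_sig).
  set (phi := fix phi k := match k with O => g O O | S k' => g (S (phi k')) k end).
  assert (Hphi : forall k, Rabs (v (phi k) - L) < RinvN k) by (intros [|k]; apply Hg).
  exists phi, L. split.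
  - intros k. simpl. destruct (Hg (S (phi k)) (S k)). lia.
  - intros e He. destruct (RinvN_cv He) as [N HN]. exists N. intros k Hk.
    specialize (HN k Hk). specialize (Hphi k). unfold R_dist in *.
    rewrite Rminus_0_r, Rabs_right in HN by (left; apply cond_pos). lra.
Qed.

Lemma Un_cv_rsum n (f : nat -> nat -> R) (L : nat -> R) :
  (forall i, (i < n)%nat -> Un_cv (fun k => f k i) (L i)) ->
  Un_cv (fun k => rsum n (f k)) (rsum n L).
Proof.
  induction n as [|n IH]; intros H; simpl; [apply Un_cv_const|].
  apply CV_plus; [apply IH; intros; apply H|apply H]; lia.
Qed.

Definition Un_cv_vec (n : nat) (v : nat -> vec) (L : vec) : Prop :=
  forall i, (i < n)%nat -> Un_cv (fun k => v k i) (L i).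

Lemma Un_cv_vec_subseq n v L phi :
  strict_incr phi -> Un_cv_vec n v L -> Un_cv_vec n (fun k => v (phi k)) L.
Proof. intros Hphi H i Hi. apply (Un_cv_subseq (fun k => v k i)); auto. Qed.

Lemma Bolzano_Weierstrass_vec n (v : nat -> vec) M :
  (forall k i, (i < n)%nat -> Rabs (v k i) <= M) ->
  exists phi L, strict_incr phi /\ Un_cv_vec n (fun k => v (phi k)) L.
Proof.
  induction n as [|n IH]; intros HM.
  - exists (fun k => k), (fun _ => 0). split; [intros k; lia|intros i Hi; lia].
  - destruct IH as [phi [L [Hphi HL]]]; [intros k i Hi; apply HM; lia|].
    destruct (Bolzano_Weierstrass_subseq (fun k => v (phi k) n) M) as [psi [Ln [Hpsi HLn]]];
      [intros k; apply HM; lia|].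
    exists (fun k => phi (psi k)), (fun i => if Nat.eq_dec i n then Ln else L i).
    split; [now apply strict_incr_comp|].
    intros i Hi. destruct (Nat.eq_dec i n) as [->|Hne]; [exact HLn|].
    apply (Un_cv_subseq (fun k => v (phi k) i)); [exact Hpsi|apply HL; lia].
Qed.

Lemma Un_cv_mulA m n A v L :
  Un_cv_vec n v L -> Un_cv_vec m (fun k => mulA n A (v k)) (mulA n A L).
Proof. intros H j Hj. apply Un_cv_rsum. intros i Hi. apply Un_cv_scal, H, Hi. Qed.

Lemma Un_cv_mulAt m n A v L :
  Un_cv_vec m v L -> Un_cv_vec n (fun k => mulAt m A (v k)) (mulAt m A L).
Proof. intros H j Hj. apply Un_cv_rsum. intros i Hi. apply Un_cv_scal, H, Hi. Qed.

Lemma Un_cv_vec_const n w : Un_cv_vec n (fun _ => w) w.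
Proof. intros i _. apply Un_cv_const. Qed.

Lemma Un_cv_vec_add n u v U V :
  Un_cv_vec n u U -> Un_cv_vec n v V -> Un_cv_vec n (fun k => vadd (u k) (v k)) (vadd U V).
Proof. intros Hu Hv i Hi. apply CV_plus; auto. Qed.

Lemma Un_cv_vec_sub n u v U V :
  Un_cv_vec n u U -> Un_cv_vec n v V -> Un_cv_vec n (fun k => vsub (u k) (v k)) (vsub U V).
Proof. intros Hu Hv i Hi. apply CV_minus; auto. Qed.

Lemma Un_cv_dot n u v U V :
  Un_cv_vec n u U -> Un_cv_vec n v V -> Un_cv (fun k => dot n (u k) (v k)) (dot n U V).
Proof. intros Hu Hv. apply Un_cv_rsum. intros i Hi. apply CV_mult; auto. Qed.

Lemma Un_cv_vec_dist n v L :
  Un_cv_vec n v L -> Un_cv (fun k => dot n (vsub (v k) L) (vsub (v k) L)) 0.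
Proof.
  intros H. rewrite <- (rsum_0 n). apply Un_cv_rsum. intros i Hi.
  replace 0 with ((L i - L i) * (L i - L i)) by ring. unfold vsub.
  apply CV_mult; apply CV_minus; auto using Un_cv_const.
Qed.

Lemma inK_limit n l u v L :
  (forall k, inK n l u (v k)) -> Un_cv_vec n v L -> inK n l u L.
Proof.
  intros Hv HL i Hi. split.
  - destruct (l i) as [a|] eqn:El; [|exact I].
    apply (Un_cv_ge_const _ _ a (HL i Hi)). intros k.
    destruct (Hv k i Hi) as [H _]. rewrite El in H. exact H.
  - destruct (u i) as [a|] eqn:Eu; [|exact I].
    apply (Un_cv_le_const _ _ a (HL i Hi)). intros k.
    destruct (Hv k i Hi) as [_ H]. rewrite Eu in H. exact H.
Qed.

Lemma projK_inK n l u x0 w : inK n l u x0 -> inK n l u (projK l u w).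
Proof.
  intros H i Hi. destruct (H i Hi) as [Hl Hu]. unfold projK.
  destruct (l i) as [a|], (u i) as [b|]; simpl; split; auto;
    unfold Rmax, Rmin; repeat destruct Rle_dec; lra.
Qed.

Lemma projK_variational n l u w w' :
  inK n l u w' -> dot n (vsub w (projK l u w)) (vsub w' (projK l u w)) <= 0.
Proof.
  intros H. apply rsum_nonpos. intros i Hi. destruct (H i Hi) as [Hl Hu].
  unfold vsub, projK.
  destruct (l i) as [a|], (u i) as [b|]; unfold Rmax, Rmin; repeat destruct Rle_dec; nra.
Qed.

Definition KKT m n A (b c : vec) l u (y x : vec) : Prop :=
  P_feasible m n A b l u x /\
  forall w, inK n l u w -> dot n (vsub (mulAt m A y) c) (vsub w x) <= 0.

Lemma KKT_P_optimal m n A b c l u y x : KKT m n A b c l u y x -> P_optimal m n A b c l u x.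
Proof.
  intros [[HK HAx] HN]. split; [split; assumption|].
  intros x' [HK' HAx']. specialize (HN x' HK').
  assert (Hb : dot m y (mulA n A (vsub x' x)) = 0).
  { unfold dot. rewrite <- (rsum_0 m). apply rsum_ext. intros.
    rewrite mulA_vsub, HAx, HAx' by assumption. ring. }
  rewrite dot_sub_l, dot_mulAt, Hb, dot_sub_r in HN. lra.
Qed.

Lemma KKT_D_optimal m n A b c l u y x : KKT m n A b c l u y x -> D_optimal m n A b c l u y.
Proof.
  intros [[HK HAx] HN].
  assert (Hb : forall y', dot n (mulAt m A y') x = dot m b y').
  { intros y'. rewrite dot_mulAt, dot_comm. apply rsum_ext. intros. rewrite HAx; auto. }
  exists (dot n (vsub (mulAt m A y) c) x). split.
  - split.
    + intros r [w [Hw ->]]. specialize (HN w Hw). rewrite dot_sub_r in HN. lra.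
    + intros r Hr. apply Hr. exists x. auto.
  - intros y' v' [Hub _].
    assert (dot n (vsub (mulAt m A y') c) x <= v') by (apply Hub; exists x; auto).
    rewrite dot_sub_l, Hb in *. lra.
Qed.

(** * Farkas' lemma by Fourier-Motzkin elimination *)

(* A system is a list of pairs [(a, beta)], each read as the constraint [dot p a y <= beta]. *)
Definition feasible (p : nat) (cs : list (vec * R)) : Prop :=
  exists y, forall e, In e cs -> dot p (fst e) y <= snd e.

Inductive conic_comb (cs : list (vec * R)) : vec -> R -> Prop :=
| conic_in a beta : In (a, beta) cs -> conic_comb cs a beta
| conic_add a1 b1 a2 b2 :
    conic_comb cs a1 b1 -> conic_comb cs a2 b2 -> conic_comb cs (vadd a1 a2) (b1 + b2)
| conic_scal r a beta : 0 <= r -> conic_comb cs a beta -> conic_comb cs (vscal r a) (r * beta).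

Definition fm_comb (p : nat) (e1 e2 : vec * R) : vec * R :=
  (vadd (vscal (- fst e2 p) (fst e1)) (vscal (fst e1 p) (fst e2)),
   - fst e2 p * snd e1 + fst e1 p * snd e2).

Definition fm_elim (p : nat) (cs : list (vec * R)) : list (vec * R) :=
  flat_map (fun e => if Req_EM_T (fst e p) 0 then [e] else []) cs ++
  flat_map (fun e1 => flat_map (fun e2 =>
    if Rlt_dec 0 (fst e1 p) then if Rlt_dec (fst e2 p) 0 then [fm_comb p e1 e2] else [] else [])
    cs) cs.

Lemma in_fm_elim p cs e :
  In e (fm_elim p cs) <->
  (In e cs /\ fst e p = 0) \/
  exists e1 e2, In e1 cs /\ In e2 cs /\ 0 < fst e1 p /\ fst e2 p < 0 /\ e = fm_comb p e1 e2.
Proof.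
  unfold fm_elim. rewrite in_app_iff, !in_flat_map. split.
  - intros [[e0 [H1 H2]]|[e1 [H1 H2]]].
    + left. destruct Req_EM_T; simpl in H2; [|tauto]. destruct H2 as [<-|[]]. auto.
    + right. rewrite in_flat_map in H2. destruct H2 as [e2 [H3 H4]].
      destruct Rlt_dec; [|simpl in H4; tauto]. destruct Rlt_dec; [|simpl in H4; tauto].
      destruct H4 as [<-|[]]. exists e1, e2. auto.
  - intros [[Hin Hz]|[e1 [e2 [H1 [H2 [P1 [Q2 ->]]]]]]].
    + left. exists e. split; [exact Hin|]. destruct Req_EM_T; [now left|contradiction].
    + right. exists e1. split; [exact H1|]. apply in_flat_map. exists e2. split; [exact H2|].
      destruct Rlt_dec; [|contradiction]. destruct Rlt_dec; [now left|contradiction].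
Qed.

Lemma conic_comb_trans cs cs' a beta :
  (forall e, In e cs' -> conic_comb cs (fst e) (snd e)) ->
  conic_comb cs' a beta -> conic_comb cs a beta.
Proof.
  intros H D. induction D as [a beta Hin| | ].
  - apply (H (a, beta) Hin).
  - now apply conic_add.
  - now apply conic_scal.
Qed.

Lemma conic_comb_coord0 cs p a beta :
  (forall e, In e cs -> fst e p = 0) -> conic_comb cs a beta -> a p = 0.
Proof.
  intros H D. induction D as [a beta Hin|a1 b1 a2 b2 _ IH1 _ IH2|r a beta _ _ IH].
  - apply (H (a, beta) Hin).
  - unfold vadd. rewrite IH1, IH2. ring.
  - unfold vscal. rewrite IH. ring.
Qed.

Lemma fm_elim_conic p cs e : In e (fm_elim p cs) -> conic_comb cs (fst e) (snd e).
Proof.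
  intros He. apply in_fm_elim in He as [[Hin _]|[e1 [e2 [H1 [H2 [P1 [Q2 ->]]]]]]].
  - destruct e. now constructor.
  - destruct e1 as [a1 b1], e2 as [a2 b2]; simpl in *.
    apply conic_add; apply conic_scal; try lra; now constructor.
Qed.

Lemma fm_elim_coord0 p cs e : In e (fm_elim p cs) -> fst e p = 0.
Proof.
  intros He. apply in_fm_elim in He as [[_ Hz]|[e1 [e2 [_ [_ [_ [_ ->]]]]]]]; [exact Hz|].
  unfold fm_comb, vadd, vscal. simpl. ring.
Qed.

Lemma finite_separation {T} (cs : list T) (P Q : T -> Prop) (g : T -> R) :
  (forall e1 e2, In e1 cs -> In e2 cs -> P e1 -> Q e2 -> g e2 <= g e1) ->
  exists t, forall e, In e cs -> (P e -> t <= g e) /\ (Q e -> g e <= t).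
Proof.
  induction cs as [|e cs IH]; intros H; [exists 0; intros e []|].
  destruct IH as [t Ht]; [intros; apply H; simpl; auto|].
  destruct (classic (P e /\ g e < t)) as [[HP Hlt]|HnP].
  - exists (g e). intros e0 [<-|Hin]; split; intros; try lra.
    + destruct (Ht e0 Hin) as [Ht0 _]. specialize (Ht0 H0). lra.
    + apply H; simpl; auto.
  - destruct (classic (Q e /\ t < g e)) as [[HQ Hlt]|HnQ].
    + exists (g e). intros e0 [<-|Hin]; split; intros; try lra.
      * apply H; simpl; auto.
      * destruct (Ht e0 Hin) as [_ Ht0]. specialize (Ht0 H0). lra.
    + exists t. intros e0 [<-|Hin]; [|now apply Ht].
      split; intros; apply Rnot_lt_le; intros Hlt; [apply HnP|apply HnQ]; auto.
Qed.

Lemma fm_elim_feasible p cs : feasible p (fm_elim p cs) -> feasible (S p) cs.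
Proof.
  intros [y Hy].
  set (g e := (snd e - dot p (fst e) y) / fst e p).
  destruct (finite_separation cs (fun e => 0 < fst e p) (fun e => fst e p < 0) g) as [t Ht].
  { intros e1 e2 H1 H2 P1 Q2.
    assert (Hin : In (fm_comb p e1 e2) (fm_elim p cs))
      by (apply in_fm_elim; right; exists e1, e2; auto).
    pose proof (Hy _ Hin) as Hc.
    unfold fm_comb in Hc. simpl in Hc. rewrite dot_lincomb in Hc.
    unfold g. apply Rmult_le_reg_r with (fst e1 p * - fst e2 p); [nra|].
    replace ((snd e2 - dot p (fst e2) y) / fst e2 p * (fst e1 p * - fst e2 p))
      with (- fst e1 p * (snd e2 - dot p (fst e2) y)) by (field; lra).
    replace ((snd e1 - dot p (fst e1) y) / fst e1 p * (fst e1 p * - fst e2 p))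
      with (- fst e2 p * (snd e1 - dot p (fst e1) y)) by (field; lra).
    lra. }
  exists (fun i => if Nat.eq_dec i p then t else y i). intros e He.
  replace (dot (S p) (fst e) (fun i => if Nat.eq_dec i p then t else y i))
    with (dot p (fst e) y + fst e p * t).
  2:{ unfold dot. simpl. destruct (Nat.eq_dec p p) as [_|]; [|lia]. f_equal.
      apply rsum_ext. intros i Hi. destruct (Nat.eq_dec i p); [lia|reflexivity]. }
  destruct (Ht e He) as [HP HQ]. unfold g in HP, HQ.
  destruct (Rtotal_order (fst e p) 0) as [Hneg|[Hz|Hpos]].
  - specialize (HQ Hneg). apply Rmult_le_compat_neg_l with (r := fst e p) in HQ; [|lra].
    replace (fst e p * ((snd e - dot p (fst e) y) / fst e p)) with (snd e - dot p (fst e) y)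
      in HQ by (field; lra).
    lra.
  - rewrite Hz, Rmult_0_l, Rplus_0_r. apply Hy, in_fm_elim. auto.
  - specialize (HP Hpos). apply Rmult_le_compat_l with (r := fst e p) in HP; [|lra].
    replace (fst e p * ((snd e - dot p (fst e) y) / fst e p)) with (snd e - dot p (fst e) y)
      in HP by (field; lra).
    lra.
Qed.

Theorem Fourier_Motzkin p cs :
  ~ feasible p cs ->
  exists a beta, conic_comb cs a beta /\ (forall i, (i < p)%nat -> a i = 0) /\ beta < 0.
Proof.
  revert cs. induction p as [|p IH]; intros cs Hinf.
  - assert (Hviol : exists e, In e cs /\ snd e < 0).
    { apply NNPP. intros Hno. apply Hinf. exists (fun _ => 0). intros e He. simpl.
      apply Rnot_lt_le. intros Hlt. apply Hno. exists e. auto. }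
    destruct Hviol as [[a beta] [Hin Hneg]].
    exists a, beta. split; [now constructor|]. split; [intros; lia|exact Hneg].
  - destruct (IH (fm_elim p cs)) as [a [beta [D [Hz Hneg]]]].
    { intros Hf. apply Hinf, fm_elim_feasible, Hf. }
    exists a, beta. split; [|split; [|exact Hneg]].
    + apply (conic_comb_trans _ (fm_elim p cs)); [apply fm_elim_conic|exact D].
    + intros i Hi. destruct (Nat.eq_dec i p) as [->|Hne]; [|apply Hz; lia].
      apply (conic_comb_coord0 (fm_elim p cs) p a beta); [apply fm_elim_coord0|exact D].
Qed.

(** * Existence of a KKT multiplier *)

Lemma common_small_step n (C : nat -> R -> Prop) :
  (forall i, (i < n)%nat -> exists ti, 0 < ti /\ forall t, 0 < t <= ti -> C i t) ->
  exists t0, 0 < t0 /\ forall i, (i < n)%nat -> C i t0.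
Proof.
  intros H.
  assert (Hall : exists t0, 0 < t0 /\ forall t, 0 < t <= t0 -> forall i, (i < n)%nat -> C i t).
  { induction n as [|n IH]; [exists 1; split; [lra|intros; lia]|].
    destruct IH as [t1 [Ht1 H1]]; [intros; apply H; lia|].
    destruct (H n) as [t2 [Ht2 H2]]; [lia|].
    exists (Rmin t1 t2). split; [now apply Rmin_pos|].
    intros t Ht i Hi. pose proof (Rmin_l t1 t2); pose proof (Rmin_r t1 t2).
    destruct (Nat.eq_dec i n) as [->|Hne]; [apply H2; lra|apply H1; [lra|lia]]. }
  destruct Hall as [t0 [Ht0 Hall]]. exists t0. split; [exact Ht0|]. apply Hall. lra.
Qed.

Lemma interval_step (lo hi : option R) r d :
  (match lo with Some a => a <= r | None => True end) ->
  (match hi with Some b => r <= b | None => True end) ->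
  (0 < d -> match hi with Some b => r < b | None => True end) ->
  (d < 0 -> match lo with Some a => a < r | None => True end) ->
  exists t0, 0 < t0 /\ forall t, 0 < t <= t0 ->
    (match lo with Some a => a <= r + t * d | None => True end) /\
    (match hi with Some b => r + t * d <= b | None => True end).
Proof.
  intros Hlo Hhi Hup Hdown.
  destruct (Rtotal_order d 0) as [Hneg|[Hz|Hpos]].
  - specialize (Hdown Hneg).
    destruct lo as [a|].
    + exists ((r - a) / - d). split; [apply Rdiv_lt_0_compat; lra|].
      intros t [Ht Htle]. split.
      * apply Rmult_le_compat_r with (r := - d) in Htle; [|lra].
        replace ((r - a) / - d * - d) with (r - a) in Htle by (field; lra). lra.
      * destruct hi; [nra|exact I].
    + exists 1. split; [lra|]. intros t Ht. split; [exact I|]. destruct hi; [nra|exact I].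
  - exists 1. split; [lra|]. intros t _. rewrite Hz, Rmult_0_r, Rplus_0_r. auto.
  - specialize (Hup Hpos).
    destruct hi as [b|].
    + exists ((b - r) / d). split; [apply Rdiv_lt_0_compat; lra|].
      intros t [Ht Htle]. split.
      * destruct lo; [nra|exact I].
      * apply Rmult_le_compat_r with (r := d) in Htle; [|lra].
        replace ((b - r) / d * d) with (b - r) in Htle by (field; lra). lra.
    + exists 1. split; [lra|]. intros t Ht. split; [|exact I]. destruct lo; [nra|exact I].
Qed.

Section Multiplier.
Variables (m n : nat) (A : nat -> nat -> R) (b c : vec) (l u : nat -> option R) (x : vec).

Definition can_increase (i : nat) : bool :=
  match u i with Some ub => if Rlt_dec (x i) ub then true else false | None => true end.
Definition can_decrease (i : nat) : bool :=
  match l i with Some lb => if Rlt_dec lb (x i) then true else false | None => true end.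

Definition col (i : nat) : vec := fun j => A j i.

(* Feasible points [y] of this system are exactly those with [A^T y - c] in the normal cone
   of [K] at [x]. *)
Definition normal_cone_system : list (vec * R) :=
  flat_map (fun i => (if can_increase i then [(col i, c i)] else []) ++
                     (if can_decrease i then [(vscal (-1) (col i), - c i)] else []))
           (seq 0 n).

Lemma in_normal_cone_system e :
  In e normal_cone_system <->
  exists i, (i < n)%nat /\
    ((can_increase i = true /\ e = (col i, c i)) \/
     (can_decrease i = true /\ e = (vscal (-1) (col i), - c i))).
Proof.
  unfold normal_cone_system. rewrite in_flat_map. split.
  - intros [i [Hi He]]. apply in_seq in Hi. exists i. split; [lia|].
    apply in_app_iff in He as [He|He]; [left|right].
    + destruct (can_increase i); simpl in He; [destruct He as [<-|[]]; auto|contradiction].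
    + destruct (can_decrease i); simpl in He; [destruct He as [<-|[]]; auto|contradiction].
  - intros [i [Hi [[Hc ->]|[Hc ->]]]]; exists i; (split; [apply in_seq; lia|]);
      apply in_app_iff; [left|right]; rewrite Hc; now left.
Qed.

Definition admissible_direction (d : vec) : Prop :=
  forall i, (i < n)%nat -> (0 < d i -> can_increase i = true) /\ (d i < 0 -> can_decrease i = true).

Lemma conic_comb_direction a beta :
  conic_comb normal_cone_system a beta ->
  exists d, admissible_direction d /\ (forall j, (j < m)%nat -> a j = mulA n A d j) /\
            beta = dot n c d.
Proof.
  intros D. induction D as [a beta Hin|a1 b1 a2 b2 _ [d1 [S1 [A1 B1]]] _ [d2 [S2 [A2 B2]]]
                           |r a beta Hr _ [d [S1 [A1 B1]]]].
  - apply in_normal_cone_system in Hin as [i [Hi [[Hc E]|[Hc E]]]]; injection E as -> ->.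
    + exists (fun k => if Nat.eq_dec k i then 1 else 0). split; [|split].
      * intros k Hk. destruct Nat.eq_dec as [->|]; split; intros; auto; lra.
      * intros j Hj. unfold mulA, col. rewrite rsum_indicator; [ring|exact Hi].
      * unfold dot. rewrite rsum_indicator; [ring|exact Hi].
    + exists (fun k => if Nat.eq_dec k i then -1 else 0). split; [|split].
      * intros k Hk. destruct Nat.eq_dec as [->|]; split; intros; auto; lra.
      * intros j Hj. unfold mulA, col, vscal. rewrite rsum_indicator; [ring|exact Hi].
      * unfold dot. rewrite rsum_indicator; [ring|exact Hi].
  - exists (vadd d1 d2). split; [|split].
    + intros i Hi. destruct (S1 i Hi), (S2 i Hi). unfold vadd. split; intros.
      * destruct (Rlt_dec 0 (d1 i)); auto. destruct (Rlt_dec 0 (d2 i)); auto. lra.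
      * destruct (Rlt_dec (d1 i) 0); auto. destruct (Rlt_dec (d2 i) 0); auto. lra.
    + intros j Hj. unfold vadd at 1. rewrite A1, A2 by exact Hj.
      unfold mulA, vadd. rewrite <- rsum_plus. apply rsum_ext. intros; ring.
    + subst. unfold dot, vadd. rewrite <- rsum_plus. apply rsum_ext. intros; ring.
  - exists (vscal r d). split; [|split].
    + intros i Hi. destruct (S1 i Hi) as [Hp Hn]. unfold vscal. split; intros.
      * apply Hp. destruct (Rlt_dec 0 (d i)); [auto|nra].
      * apply Hn. destruct (Rlt_dec (d i) 0); [auto|nra].
    + intros j Hj. unfold vscal at 1. rewrite A1 by exact Hj.
      unfold mulA, vscal. rewrite <- rsum_scal. apply rsum_ext. intros; ring.
    + subst. unfold dot, vscal. rewrite <- rsum_scal. apply rsum_ext. intros; ring.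
Qed.

Lemma admissible_direction_step d :
  inK n l u x -> admissible_direction d ->
  exists t, 0 < t /\ inK n l u (vadd x (vscal t d)).
Proof.
  intros HK Hd. apply (common_small_step n (fun i t => _ /\ _)).
  intros i Hi. destruct (HK i Hi) as [Hlo Hhi]. destruct (Hd i Hi) as [Hup Hdown].
  apply interval_step; [exact Hlo|exact Hhi| |].
  - intros Hpos. specialize (Hup Hpos). unfold can_increase in Hup.
    destruct (u i); [destruct Rlt_dec; [assumption|discriminate]|exact I].
  - intros Hneg. specialize (Hdown Hneg). unfold can_decrease in Hdown.
    destruct (l i); [destruct Rlt_dec; [assumption|discriminate]|exact I].
Qed.

Lemma normal_cone_coord i w g :
  inK n l u x -> inK n l u w -> (i < n)%nat ->
  (can_increase i = true -> g <= 0) -> (can_decrease i = true -> 0 <= g) ->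
  g * (w i - x i) <= 0.
Proof.
  intros HK Hw Hi Hup Hdown. destruct (HK i Hi) as [Hlo Hhi], (Hw i Hi) as [Hwlo Hwhi].
  unfold can_increase, can_decrease in *.
  destruct (u i) as [ub|], (l i) as [lb|];
    repeat match goal with
    | H : context [Rlt_dec ?a ?b] |- _ => destruct (Rlt_dec a b) as [?|?%Rnot_lt_le]
    end;
    try specialize (Hup eq_refl); try specialize (Hdown eq_refl);
    first [nra | replace (w i - x i) with 0 by lra; lra | replace g with 0 by lra; lra].
Qed.

Theorem KKT_exists : P_optimal m n A b c l u x -> exists y, KKT m n A b c l u y x.
Proof.
  intros [[HK HAx] Hopt].
  assert (Hfeas : feasible m normal_cone_system).
  { (* otherwise Farkas' lemma gives a direction d along which x stays feasible for a small
       step while c^T d < 0 *)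
    apply NNPP. intros Hinf.
    destruct (Fourier_Motzkin m _ Hinf) as [a [beta [D [Ha Hbeta]]]].
    destruct (conic_comb_direction _ _ D) as [d [Hd [Ad Bd]]].
    destruct (admissible_direction_step d HK Hd) as [t [Ht HKt]].
    assert (Hcheaper : dot n c (vadd x (vscal t d)) = dot n c x + t * beta).
    { rewrite Bd. unfold dot. rewrite <- rsum_scal, <- rsum_plus.
      apply rsum_ext. intros; unfold vadd, vscal; ring. }
    assert (Hfeas_t : P_feasible m n A b l u (vadd x (vscal t d))).
    { split; [exact HKt|]. intros j Hj. rewrite mulA_lincomb, <- Ad, Ha, HAx by exact Hj. ring. }
    specialize (Hopt _ Hfeas_t). nra. }
  destruct Hfeas as [y Hy]. exists y. split; [split; assumption|].
  intros w Hw. apply rsum_nonpos. intros i Hi. apply normal_cone_coord; try assumption.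
  - intros Hc.
    assert (Hin : In (col i, c i) normal_cone_system)
      by (apply in_normal_cone_system; exists i; auto).
    specialize (Hy _ Hin). simpl in Hy. change (dot m (col i) y) with (mulAt m A y i) in Hy.
    unfold vsub. lra.
  - intros Hc.
    assert (Hin : In (vscal (-1) (col i), - c i) normal_cone_system)
      by (apply in_normal_cone_system; exists i; auto).
    specialize (Hy _ Hin). simpl in Hy. rewrite dot_opp in Hy.
    change (dot m (col i) y) with (mulAt m A y i) in Hy. unfold vsub. lra.
Qed.
End Multiplier.

(** * Convergence of Snipal *)

Section Snipal.
Variables (m n : nat) (A : nat -> nat -> R) (b c : vec) (l u : nat -> option R)
  (sigma tau eps : nat -> R) (tau_inf E : R) (x y : nat -> vec).
Hypothesis HKne : exists x0, inK n l u x0.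
Hypothesis Hsig0 : 0 < sigma 0%nat.
Hypothesis Hsig_mon : forall k, sigma k <= sigma (S k).
Hypothesis Htau_pos : forall k, 0 < tau k.
Hypothesis Htau_mon : forall k, tau (S k) <= tau k.
Hypothesis Htau_lim : Un_cv tau tau_inf.
Hypothesis Htau_inf : 0 < tau_inf.
Hypothesis Heps_pos : forall k, 0 <= eps k.
Hypothesis Heps_sum : Un_cv (fun k => rsum k eps) E.
Hypothesis Hstop : forall k,
  vnorm m (grad_psi m n A b c l u (sigma k) (tau k) (x k) (y k) (y (S k)))
    <= Rmin (sqrt (tau k)) 1 / sigma k * eps k.
Hypothesis Hx : forall k,
  x (S k) = projK l u (vsub (x k) (vscal (sigma k) (vsub c (mulAt m A (y (S k)))))).

Lemma sigma_ge0 k : sigma 0 <= sigma k.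
Proof. induction k; [lra|]. specialize (Hsig_mon k). lra. Qed.

Lemma sigma_pos k : 0 < sigma k.
Proof. pose proof (sigma_ge0 k). lra. Qed.

Lemma tau_le0 k : tau k <= tau 0.
Proof. induction k; [lra|]. specialize (Htau_mon k). lra. Qed.

Lemma tau_ge_inf k : tau_inf <= tau k.
Proof. apply (decreasing_ineq tau); [exact Htau_mon|exact Htau_lim]. Qed.

Lemma x_next_inK k : inK n l u (x (S k)).
Proof. destruct HKne as [x0 H0]. rewrite Hx. exact (projK_inK n l u x0 _ H0). Qed.

Definition residual k : vec := grad_psi m n A b c l u (sigma k) (tau k) (x k) (y k) (y (S k)).

Lemma residual_eq k j :
  residual k j = mulA n A (x (S k)) j - b j + tau k / sigma k * (y (S k) j - y k j).
Proof.
  unfold residual, grad_psi. set (P := projK l u _).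
  assert (HP : mulA n A P j = mulA n A (x (S k)) j).
  { apply rsum_ext. intros i _. f_equal. unfold P. rewrite Hx.
    unfold projK, vadd, vscal, vsub.
    replace (x k i + sigma k * (mulAt m A (y (S k)) i - c i))
      with (x k i - sigma k * (c i - mulAt m A (y (S k)) i)) by ring.
    reflexivity. }
  unfold vadd, vscal, vsub. rewrite HP. ring.
Qed.

Lemma sigma_residual_le k : sigma k * vnorm m (residual k) <= Rmin (sqrt (tau k)) 1 * eps k.
Proof.
  pose proof (sigma_pos k).
  apply Rmult_le_reg_l with (/ sigma k); [now apply Rinv_0_lt_compat|].
  rewrite <- Rmult_assoc, Rinv_l, Rmult_1_l by lra.
  replace (/ sigma k * (Rmin (sqrt (tau k)) 1 * eps k))
    with (Rmin (sqrt (tau k)) 1 / sigma k * eps k) by (field; lra).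
  apply Hstop.
Qed.

Lemma residual_le k : vnorm m (residual k) <= eps k / sigma 0.
Proof.
  pose proof (sigma_residual_le k). pose proof (sigma_ge0 k). pose proof (Heps_pos k).
  pose proof (vnorm_nonneg m (residual k)). pose proof (Rmin_r (sqrt (tau k)) 1).
  apply Rmult_le_reg_l with (sigma 0); [exact Hsig0|].
  replace (sigma 0 * (eps k / sigma 0)) with (eps k) by (field; lra). nra.
Qed.

Lemma eps_to0 : Un_cv eps 0.
Proof. apply (nonneg_bounded_sums_to0 eps E Heps_pos). intros k. now apply rsum_le_lim. Qed.

Definition fejer_dist2 (ys xs : vec) (t : R) (yy xx : vec) : R :=
  t * dot m (vsub yy ys) (vsub yy ys) + dot n (vsub xx xs) (vsub xx xs).

Definition fejer_dist (ys xs : vec) (k : nat) : R := sqrt (fejer_dist2 ys xs (tau k) (y k) (x k)).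

Definition step2 (k : nat) : R := fejer_dist2 (y k) (x k) (tau k) (y (S k)) (x (S k)).

Lemma fejer_dist2_nonneg ys xs t yy xx : 0 <= t -> 0 <= fejer_dist2 ys xs t yy xx.
Proof.
  intros Ht. unfold fejer_dist2.
  pose proof (dot_nonneg m (vsub yy ys)); pose proof (dot_nonneg n (vsub xx xs)). nra.
Qed.

Lemma fejer_dist_nonneg ys xs k : 0 <= fejer_dist ys xs k.
Proof. apply sqrt_pos. Qed.

Lemma step2_nonneg k : 0 <= step2 k.
Proof. apply fejer_dist2_nonneg. left. apply Htau_pos. Qed.

Lemma fejer_dist2_tau_mono ys xs t t' yy xx :
  t' <= t -> fejer_dist2 ys xs t' yy xx <= fejer_dist2 ys xs t yy xx.
Proof. intros Ht. unfold fejer_dist2. pose proof (dot_nonneg m (vsub yy ys)). nra. Qed.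

Lemma prox_descent ys xs k :
  KKT m n A b c l u ys xs ->
  dot n (vsub (x (S k)) (x k)) (vsub (x (S k)) xs)
  + tau k * dot m (vsub (y (S k)) ys) (vsub (y (S k)) (y k))
  <= sigma k * dot m (vsub (y (S k)) ys) (residual k).
Proof.
  intros [[HKs HAs] HNs].
  pose proof (projK_variational n l u
    (vsub (x k) (vscal (sigma k) (vsub c (mulAt m A (y (S k)))))) xs HKs) as Hproj.
  rewrite <- Hx in Hproj.
  set (X1 := x (S k)) in *; set (X0 := x k) in *; set (Y1 := y (S k)) in *; set (Y0 := y k) in *.
  set (s := sigma k) in *; set (t := tau k) in *.
  assert (Hs : 0 < s) by apply sigma_pos.
  pose proof (HNs X1 (x_next_inK k)) as Hnormal.
  assert (Hsplit : dot n (vsub (vsub X0 (vscal s (vsub c (mulAt m A Y1)))) X1) (vsub xs X1)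
    = dot n (vsub X1 X0) (vsub X1 xs)
      - s * dot n (mulAt m A (vsub Y1 ys)) (vsub X1 xs)
      - s * dot n (vsub (mulAt m A ys) c) (vsub X1 xs)).
  { unfold dot. rewrite <- !rsum_scal, <- !rsum_minus. apply rsum_ext. intros i _.
    rewrite mulAt_vsub. unfold vsub, vscal. ring. }
  assert (Hres : dot m (vsub Y1 ys) (mulA n A (vsub X1 xs))
                 = dot m (vsub Y1 ys) (residual k) - t / s * dot m (vsub Y1 ys) (vsub Y1 Y0)).
  { unfold dot. rewrite <- rsum_scal, <- rsum_minus. apply rsum_ext. intros j Hj.
    rewrite mulA_vsub, residual_eq, HAs by exact Hj. unfold vsub. fold X1 Y1 Y0 s t. ring. }
  rewrite dot_mulAt, Hres in Hsplit.
  replace (s * (dot m (vsub Y1 ys) (residual k) - t / s * dot m (vsub Y1 ys) (vsub Y1 Y0)))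
    with (s * dot m (vsub Y1 ys) (residual k) - t * dot m (vsub Y1 ys) (vsub Y1 Y0))
    in Hsplit by (field; lra).
  nra.
Qed.

Lemma residual_error_le ys xs k :
  sigma k * dot m (vsub (y (S k)) ys) (residual k)
  <= eps k * sqrt (fejer_dist2 ys xs (tau k) (y (S k)) (x (S k))).
Proof.
  set (dy := vsub (y (S k)) ys).
  assert (Hsig : sigma k * vnorm m (residual k) <= sqrt (tau k) * eps k).
  { eapply Rle_trans; [apply sigma_residual_le|].
    apply Rmult_le_compat_r; [apply Heps_pos|apply Rmin_l]. }
  assert (Hdy : sqrt (tau k) * vnorm m dy <= sqrt (fejer_dist2 ys xs (tau k) (y (S k)) (x (S k)))).
  { unfold vnorm. rewrite <- sqrt_mult by (apply dot_nonneg || (left; apply Htau_pos)).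
    apply sqrt_le_1_alt. unfold fejer_dist2. fold dy.
    pose proof (dot_nonneg n (vsub (x (S k)) xs)). lra. }
  pose proof (dot_Cauchy_Schwarz m dy (residual k)).
  pose proof (vnorm_nonneg m dy). pose proof (sigma_pos k). pose proof (Heps_pos k).
  apply Rle_trans with (vnorm m dy * (sigma k * vnorm m (residual k))); [nra|].
  apply Rle_trans with (vnorm m dy * (sqrt (tau k) * eps k)); [now apply Rmult_le_compat_l|].
  nra.
Qed.

Lemma fejer_ineq ys xs k :
  KKT m n A b c l u ys xs ->
  fejer_dist2 ys xs (tau k) (y (S k)) (x (S k)) + step2 k
  <= fejer_dist2 ys xs (tau k) (y k) (x k)
     + 2 * eps k * sqrt (fejer_dist2 ys xs (tau k) (y (S k)) (x (S k))).
Proof.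
  intros Hkkt.
  pose proof (prox_descent ys xs k Hkkt) as Hd.
  pose proof (residual_error_le ys xs k) as He.
  pose proof (dot_polarization n (x (S k)) (x k) xs) as Px.
  pose proof (dot_polarization m (y (S k)) ys (y k)) as Py.
  rewrite (dot_vsub_sym m ys (y k)) in Py. apply (Rmult_eq_compat_l (tau k)) in Py.
  unfold step2, fejer_dist2 in *. lra.
Qed.

Lemma fejer_dist_step ys xs k :
  KKT m n A b c l u ys xs ->
  fejer_dist ys xs (S k) <= fejer_dist ys xs k + 2 * eps k /\
  step2 k <= fejer_dist ys xs k * fejer_dist ys xs k
             - fejer_dist ys xs (S k) * fejer_dist ys xs (S k)
             + 2 * eps k * (fejer_dist ys xs k + 2 * eps k).
Proof.
  intros Hkkt. pose proof (fejer_ineq ys xs k Hkkt) as Hf.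
  pose proof (Htau_pos k). pose proof (Heps_pos k).
  set (d1 := fejer_dist2 ys xs (tau k) (y (S k)) (x (S k))) in Hf.
  assert (Hd1 : 0 <= d1) by (apply fejer_dist2_nonneg; lra).
  assert (Hr1 : fejer_dist ys xs (S k) <= sqrt d1)
    by (apply sqrt_le_1_alt, fejer_dist2_tau_mono, Htau_mon).
  rewrite <- (sqrt_sqrt d1) in Hf at 1 by exact Hd1.
  rewrite <- (sqrt_sqrt (fejer_dist2 ys xs (tau k) (y k) (x k))) in Hf
    by (apply fejer_dist2_nonneg; lra).
  fold (fejer_dist ys xs k) in Hf.
  pose proof (sqrt_pos d1). pose proof (step2_nonneg k).
  pose proof (fejer_dist_nonneg ys xs k). pose proof (fejer_dist_nonneg ys xs (S k)).
  (* from [s^2 - 2 e s <= r^2] : [(s - e)^2 <= (r + e)^2] *)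
  assert (Hs1 : sqrt d1 <= fejer_dist ys xs k + 2 * eps k) by nra.
  split; [lra|nra].
Qed.

Lemma fejer_dist_quasi_mono ys xs i j :
  KKT m n A b c l u ys xs -> (i <= j)%nat ->
  fejer_dist ys xs j <= fejer_dist ys xs i
                        + (rsum j (fun k => 2 * eps k) - rsum i (fun k => 2 * eps k)).
Proof.
  intros Hkkt Hij. induction Hij as [|j Hij IH]; [lra|].
  destruct (fejer_dist_step ys xs j Hkkt) as [Hj _]. simpl. lra.
Qed.

Lemma eps_le_sum k : eps k <= E.
Proof.
  pose proof (rsum_le_lim eps E (S k) Heps_pos Heps_sum).
  pose proof (rsum_nonneg k eps (fun i _ => Heps_pos i)). simpl in *. lra.
Qed.

Lemma fejer_dist_bounded ys xs k :
  KKT m n A b c l u ys xs -> fejer_dist ys xs k <= fejer_dist ys xs 0 + 2 * E.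
Proof.
  intros Hkkt. pose proof (fejer_dist_quasi_mono ys xs 0 k Hkkt (Nat.le_0_l k)) as Hk.
  rewrite rsum_scal in Hk. simpl in Hk. pose proof (rsum_le_lim eps E k Heps_pos Heps_sum). lra.
Qed.

Lemma step2_to0 ys xs : KKT m n A b c l u ys xs -> Un_cv step2 0.
Proof.
  intros Hkkt. set (R := fejer_dist ys xs). set (C := 2 * (R 0%nat + 4 * E)).
  assert (HE : 0 <= E) by (pose proof (eps_le_sum 0); pose proof (Heps_pos 0); lra).
  assert (HC : 0 <= C) by (unfold C, R; pose proof (fejer_dist_nonneg ys xs 0); lra).
  assert (Herr : forall k, 2 * eps k * (R k + 2 * eps k) <= C * eps k).
  { intros k. pose proof (fejer_dist_bounded ys xs k Hkkt). pose proof (eps_le_sum k).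
    pose proof (Heps_pos k). unfold C, R in *. nra. }
  assert (Hsum : forall K, rsum K step2 <= R 0%nat * R 0%nat - R K * R K + C * rsum K eps).
  { induction K as [|K IH]; simpl; [lra|].
    destruct (fejer_dist_step ys xs K Hkkt) as [_ HK]. specialize (Herr K). unfold R in *. lra. }
  apply (nonneg_bounded_sums_to0 step2 (R 0%nat * R 0%nat + C * E) step2_nonneg).
  intros K. specialize (Hsum K). pose proof (rsum_le_lim eps E K Heps_pos Heps_sum).
  assert (C * rsum K eps <= C * E) by (apply Rmult_le_compat_l; assumption).
  pose proof (fejer_dist_nonneg ys xs K). unfold R in *. nra.
Qed.

Lemma x_dist_le_fejer ys xs k : vnorm n (vsub (x k) xs) <= fejer_dist ys xs k.
Proof.
  apply sqrt_le_1_alt. unfold fejer_dist2.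
  pose proof (dot_nonneg m (vsub (y k) ys)). pose proof (Htau_pos k). nra.
Qed.

Lemma y_dist_le_fejer ys xs k : sqrt tau_inf * vnorm m (vsub (y k) ys) <= fejer_dist ys xs k.
Proof.
  unfold vnorm. rewrite <- sqrt_mult by (lra || apply dot_nonneg).
  apply sqrt_le_1_alt. unfold fejer_dist2.
  pose proof (dot_nonneg m (vsub (y k) ys)). pose proof (dot_nonneg n (vsub (x k) xs)).
  pose proof (tau_ge_inf k). nra.
Qed.

Lemma iterates_bounded ys xs :
  KKT m n A b c l u ys xs -> exists M, forall k, vnorm m (y k) <= M /\ vnorm n (x k) <= M.
Proof.
  intros Hkkt. set (B := fejer_dist ys xs 0 + 2 * E).
  exists (B / sqrt tau_inf + vnorm m ys + (B + vnorm n xs)). intros k.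
  pose proof (fejer_dist_bounded ys xs k Hkkt) as HB. fold B in HB.
  pose proof (sqrt_lt_R0 _ Htau_inf).
  assert (Hy : vnorm m (vsub (y k) ys) <= B / sqrt tau_inf).
  { apply Rmult_le_reg_l with (sqrt tau_inf); [lra|].
    replace (sqrt tau_inf * (B / sqrt tau_inf)) with B by (field; lra).
    pose proof (y_dist_le_fejer ys xs k). lra. }
  pose proof (x_dist_le_fejer ys xs k).
  pose proof (vnorm_le_sub_add m (y k) ys). pose proof (vnorm_le_sub_add n (x k) xs).
  pose proof (vnorm_nonneg m ys). pose proof (vnorm_nonneg n xs).
  pose proof (vnorm_nonneg n (vsub (x k) xs)). pose proof (vnorm_nonneg m (vsub (y k) ys)).
  split; lra.
Qed.

Lemma step2_y_comp k j :
  (j < m)%nat -> tau_inf * ((y (S k) j - y k j) * (y (S k) j - y k j)) <= step2 k.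
Proof.
  intros Hj. pose proof (comp_sq_le_dot m (vsub (y (S k)) (y k)) j Hj) as Hc.
  unfold vsub at 1 2 in Hc.
  pose proof (dot_nonneg n (vsub (x (S k)) (x k))). pose proof (tau_ge_inf k).
  pose proof (Rle_0_sqr (y (S k) j - y k j)). unfold Rsqr in *.
  unfold step2, fejer_dist2. nra.
Qed.

Lemma step2_x_comp k i : (i < n)%nat -> (x (S k) i - x k i) * (x (S k) i - x k i) <= step2 k.
Proof.
  intros Hi. pose proof (comp_sq_le_dot n (vsub (x (S k)) (x k)) i Hi) as Hc.
  unfold vsub at 1 2 in Hc.
  pose proof (dot_nonneg m (vsub (y (S k)) (y k))). pose proof (Htau_pos k).
  unfold step2, fejer_dist2. nra.
Qed.

Lemma residual_to0 j : (j < m)%nat -> Un_cv (fun k => residual k j) 0.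
Proof.
  intros Hj. apply Un_cv_sq_squeeze0 with (fun k => eps k / sigma 0 * (eps k / sigma 0)).
  - intros k. eapply Rle_trans; [exact (comp_sq_le_dot m (residual k) j Hj)|].
    rewrite <- vnorm_sq.
    pose proof (residual_le k). pose proof (vnorm_nonneg m (residual k)).
    apply Rmult_le_compat; assumption.
  - replace 0 with (0 / sigma 0 * (0 / sigma 0)) by (field; lra).
    apply CV_mult; apply CV_mult; auto using eps_to0, Un_cv_const.
Qed.

Lemma dual_step_to0 ys xs j :
  KKT m n A b c l u ys xs -> (j < m)%nat ->
  Un_cv (fun k => tau k / sigma k * (y (S k) j - y k j)) 0.
Proof.
  intros Hkkt Hj. set (q := tau 0 / sigma 0).
  apply Un_cv_sq_squeeze0 with (fun k => q * q / tau_inf * step2 k).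
  - intros k. pose proof (step2_y_comp k j Hj). pose proof (Htau_pos k). pose proof (tau_le0 k).
    pose proof (sigma_pos k). pose proof (sigma_ge0 k).
    assert (Hq : 0 <= tau k / sigma k <= q).
    { split; [left; apply Rdiv_lt_0_compat; lra|].
      unfold q, Rdiv. apply Rmult_le_compat; try lra.
      - left. now apply Rinv_0_lt_compat.
      - now apply Rinv_le_contravar. }
    set (d := y (S k) j - y k j) in *.
    assert (Hd : d * d <= step2 k / tau_inf).
    { apply Rmult_le_reg_l with tau_inf; [lra|].
      replace (tau_inf * (step2 k / tau_inf)) with (step2 k) by (field; lra). lra. }
    replace (q * q / tau_inf * step2 k) with (q * q * (step2 k / tau_inf)) by (field; lra).
    replace (tau k / sigma k * d * (tau k / sigma k * d))
      with (tau k / sigma k * (tau k / sigma k) * (d * d)) by ring.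
    apply Rmult_le_compat; [nra|nra|apply Rmult_le_compat; lra|exact Hd].
  - replace 0 with (q * q / tau_inf * 0) by ring.
    apply Un_cv_scal, (step2_to0 ys xs Hkkt).
Qed.

Lemma feasibility_residual_to0 ys xs j :
  KKT m n A b c l u ys xs -> (j < m)%nat ->
  Un_cv (fun k => mulA n A (x (S k)) j - b j) 0.
Proof.
  intros Hkkt Hj.
  apply Un_cv_ext with (fun k => residual k j - tau k / sigma k * (y (S k) j - y k j)).
  - intros k. rewrite residual_eq. ring.
  - replace 0 with (0 - 0) by ring.
    apply CV_minus; [apply residual_to0|apply (dual_step_to0 ys xs)]; assumption.
Qed.

Definition scaled_step (k : nat) : vec := fun i => (x k i - x (S k) i) / sigma k.

Lemma scaled_step_to0 ys xs :
  KKT m n A b c l u ys xs -> Un_cv_vec n scaled_step (fun _ => 0).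
Proof.
  intros Hkkt i Hi.
  apply Un_cv_sq_squeeze0 with (fun k => / (sigma 0 * sigma 0) * step2 k).
  - intros k. pose proof (step2_x_comp k i Hi). pose proof (sigma_ge0 k). pose proof Hsig0.
    pose proof (Rle_0_sqr (x (S k) i - x k i)). unfold Rsqr in *.
    unfold scaled_step.
    replace ((x k i - x (S k) i) / sigma k * ((x k i - x (S k) i) / sigma k))
      with (/ (sigma k * sigma k) * ((x (S k) i - x k i) * (x (S k) i - x k i))) by (field; lra).
    apply Rmult_le_compat; [left; apply Rinv_0_lt_compat; nra|assumption| |assumption].
    apply Rinv_le_contravar; nra.
  - replace 0 with (/ (sigma 0 * sigma 0) * 0) by ring. apply Un_cv_scal, (step2_to0 ys xs Hkkt).
Qed.

Lemma prox_normal_ineq k w :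
  inK n l u w ->
  dot n (vadd (scaled_step k) (vsub (mulAt m A (y (S k))) c)) (vsub w (x (S k))) <= 0.
Proof.
  intros Hw. pose proof (projK_variational n l u
    (vsub (x k) (vscal (sigma k) (vsub c (mulAt m A (y (S k)))))) w Hw) as Hproj.
  rewrite <- Hx in Hproj. pose proof (sigma_pos k) as Hs.
  replace (dot n (vsub (vsub (x k) (vscal (sigma k) (vsub c (mulAt m A (y (S k)))))) (x (S k)))
                 (vsub w (x (S k))))
    with (sigma k * dot n (vadd (scaled_step k) (vsub (mulAt m A (y (S k))) c)) (vsub w (x (S k))))
    in Hproj.
  - nra.
  - unfold dot. rewrite <- rsum_scal. apply rsum_ext. intros i _.
    unfold scaled_step, vadd, vsub, vscal. field. lra.
Qed.

Section Cluster.
Variables (ys xs ys' xs' : vec) (theta : nat -> nat).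
Hypothesis Hkkt : KKT m n A b c l u ys xs.
Hypothesis Htheta : strict_incr theta.
Hypothesis Hxs' : Un_cv_vec n (fun k => x (S (theta k))) xs'.
Hypothesis Hys' : Un_cv_vec m (fun k => y (S (theta k))) ys'.

Lemma cluster_KKT : KKT m n A b c l u ys' xs'.
Proof.
  split; [split|].
  - apply (inK_limit n l u (fun k => x (S (theta k)))); [intros; apply x_next_inK|exact Hxs'].
  - intros j Hj.
    pose proof (Un_cv_subseq _ _ theta Htheta (feasibility_residual_to0 ys xs j Hkkt Hj)) as Hto0.
    assert (Hlim : Un_cv (fun k => mulA n A (x (S (theta k))) j - b j) (mulA n A xs' j - b j))
      by (apply CV_minus; [apply (Un_cv_mulA m n A _ _ Hxs' j Hj)|apply Un_cv_const]).
    pose proof (UL_sequence _ _ _ Hlim Hto0). lra.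
  - intros w Hw.
    assert (Hdir : Un_cv_vec n
              (fun k => vadd (scaled_step (theta k)) (vsub (mulAt m A (y (S (theta k)))) c))
              (vadd (fun _ => 0) (vsub (mulAt m A ys') c))).
    { apply Un_cv_vec_add; [apply Un_cv_vec_subseq, scaled_step_to0 with ys xs; assumption|].
      apply Un_cv_vec_sub; [now apply Un_cv_mulAt|apply Un_cv_vec_const]. }
    assert (Hgap : Un_cv_vec n (fun k => vsub w (x (S (theta k)))) (vsub w xs'))
      by (apply Un_cv_vec_sub; [apply Un_cv_vec_const|exact Hxs']).
    pose proof (Un_cv_le_const _ _ 0 (Un_cv_dot n _ _ _ _ Hdir Hgap)
                  (fun k => prox_normal_ineq (theta k) w Hw)) as Hle.
    replace (dot n (vsub (mulAt m A ys') c) (vsub w xs'))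
      with (dot n (vadd (fun _ => 0) (vsub (mulAt m A ys') c)) (vsub w xs'));
      [exact Hle|apply rsum_ext; intros; unfold vadd; ring].
Qed.

Lemma fejer_dist_cluster_to0 : Un_cv (fejer_dist ys' xs') 0.
Proof.
  apply (quasi_Fejer_to0 _ (fun k => 2 * eps k) (2 * E)).
  - intros k. apply fejer_dist_nonneg.
  - intros k. pose proof (Heps_pos k). lra.
  - apply Un_cv_ext with (fun k => 2 * rsum k eps); [intros; now rewrite rsum_scal|].
    now apply Un_cv_scal.
  - intros i j. apply fejer_dist_quasi_mono, cluster_KKT.
  - intros e He N.
    assert (Hsmall : Un_cv (fun k =>
              tau 0 * dot m (vsub (y (S (theta k))) ys') (vsub (y (S (theta k))) ys')
              + dot n (vsub (x (S (theta k))) xs') (vsub (x (S (theta k))) xs')) 0).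
    { replace 0 with (tau 0 * 0 + 0) by ring.
      apply CV_plus; [apply Un_cv_scal|]; apply Un_cv_vec_dist; assumption. }
    destruct (Hsmall (e * e)) as [K HK]; [nra|].
    exists (S (theta (max N K))). split; [pose proof (strict_incr_ge theta Htheta (max N K)); lia|].
    specialize (HK (max N K) (Nat.le_max_r _ _)).
    unfold R_dist in HK. rewrite Rminus_0_r in HK. apply Rabs_def2 in HK as [HK _].
    unfold fejer_dist. rewrite <- (sqrt_square e) by lra. apply sqrt_lt_1_alt. split.
    + apply fejer_dist2_nonneg. left. apply Htau_pos.
    + eapply Rle_lt_trans; [|exact HK]. apply fejer_dist2_tau_mono, tau_le0.
Qed.
End Cluster.

Theorem Snipal_converges ys xs :
  KKT m n A b c l u ys xs ->
  exists ys' xs', KKT m n A b c l u ys' xs' /\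
    Un_cv (fun k => vnorm n (vsub (x k) xs')) 0 /\ Un_cv (fun k => vnorm m (vsub (y k) ys')) 0.
Proof.
  intros Hkkt. destruct (iterates_bounded ys xs Hkkt) as [M HM].
  destruct (Bolzano_Weierstrass_vec n (fun k => x (S k)) M) as [phi [xs' [Hphi Hx']]].
  { intros k i Hi. eapply Rle_trans; [exact (comp_abs_le_vnorm n _ i Hi)|apply HM]. }
  destruct (Bolzano_Weierstrass_vec m (fun k => y (S (phi k))) M) as [psi [ys' [Hpsi Hy']]].
  { intros k i Hi. eapply Rle_trans; [exact (comp_abs_le_vnorm m _ i Hi)|apply HM]. }
  set (theta k := phi (psi k)).
  assert (Htheta : strict_incr theta) by exact (strict_incr_comp phi psi Hphi Hpsi).
  assert (Hx'' : Un_cv_vec n (fun k => x (S (theta k))) xs')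
    by exact (Un_cv_vec_subseq n (fun k => x (S (phi k))) xs' psi Hpsi Hx').
  pose proof (fejer_dist_cluster_to0 ys xs ys' xs' theta Hkkt Htheta Hx'' Hy') as Hdist.
  exists ys', xs'. split; [|split].
  - exact (cluster_KKT ys xs ys' xs' theta Hkkt Htheta Hx'' Hy').
  - apply Un_cv_squeeze0 with (fejer_dist ys' xs'); [|exact Hdist].
    intros k. rewrite Rabs_right by (apply Rle_ge, vnorm_nonneg). apply x_dist_le_fejer.
  - pose proof (sqrt_lt_R0 _ Htau_inf).
    apply Un_cv_squeeze0 with (fun k => / sqrt tau_inf * fejer_dist ys' xs' k).
    + intros k. rewrite Rabs_right by (apply Rle_ge, vnorm_nonneg).
      apply Rmult_le_reg_l with (sqrt tau_inf); [lra|].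
      rewrite <- Rmult_assoc, Rinv_r, Rmult_1_l by lra. apply y_dist_le_fejer.
    + replace 0 with (/ sqrt tau_inf * 0) by ring. now apply Un_cv_scal.
Qed.
End Snipal.

Theorem mainTheorem8
  (m n : nat) (A : nat -> nat -> R) (b c : vec) (l u : nat -> option R)
  (sigma tau eps : nat -> R) (tau_inf : R) (x y : nat -> vec)
  (* the solution sets of (P) and (D) are nonempty *)
  (HP : exists xs, P_optimal m n A b c l u xs)
  (HD : exists ys, D_optimal m n A b c l u ys)
  (HA : full_row_rank m n A)
  (* sigma_0 > 0, {sigma_k} nondecreasing *)
  (Hsig0 : 0 < sigma 0%nat)
  (Hsig_mon : forall k, sigma k <= sigma (S k))
  (* tau_k positive, nonincreasing, tau_k -> tau_inf > 0 *)
  (Htau_pos : forall k, 0 < tau k)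
  (Htau_mon : forall k, tau (S k) <= tau k)
  (Htau_lim : Un_cv tau tau_inf)
  (Htau_inf : 0 < tau_inf)
  (* eps_k >= 0 summable *)
  (Heps_pos : forall k, 0 <= eps k)
  (Heps_sum : exists s, Un_cv (fun N => sum_f_R0 eps N) s)
  (* Snipal iterations with stopping criterion (A') *)
  (Hstop : forall k,
     vnorm m (grad_psi m n A b c l u (sigma k) (tau k) (x k) (y k) (y (S k)))
       <= Rmin (sqrt (tau k)) 1 / sigma k * eps k)
  (Hx : forall k,
     x (S k) = projK l u (vsub (x k) (vscal (sigma k) (vsub c (mulAt m A (y (S k))))))) :
  (exists M, forall k, vnorm m (y k) <= M /\ vnorm n (x k) <= M) /\
  (exists xs, P_optimal m n A b c l u xs /\
     Un_cv (fun k => vnorm n (vsub (x k) xs)) 0) /\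
  (exists ys, D_optimal m n A b c l u ys /\
     Un_cv (fun k => vnorm m (vsub (y k) ys)) 0).
Proof.
  destruct HP as [xb Hxb]. destruct (KKT_exists m n A b c l u xb Hxb) as [yb Hkkt].
  assert (HKne : exists x0, inK n l u x0) by (exists xb; apply Hkkt).
  destruct Heps_sum as [E HE]. apply Un_cv_rsum_series in HE.
  split; [eapply iterates_bounded; eassumption|].
  edestruct Snipal_converges as [ys [xs [Hkkt' [Hxc Hyc]]]]; try eassumption.
  split; [exists xs|exists ys]; split; try eassumption.
  - eapply KKT_P_optimal; eassumption.
  - eapply KKT_D_optimal; eassumption.
Qed.
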